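(* Let $T$ be an ergodic measure-preserving transformation of a Lebesgue probability space $(X,\mathcal B,\mu)$ and let $g\in L^\infty(X,\mu)$. The following are equivalent: (i) $g$ is cohomologous to a constant in $L^\infty$; (ii) there is a constant $C$ such that for $\mu$-a.e. $x$ one has $R^g_{x,l}\le C$ for all integers $l\ge1$; (iii) there is a constant $C$ such that for $\mu$-a.e. $x$ there exists a sequence of positive integers $l_n=l_n(x)\to\infty$ with $R^g_{x,l_n}\le C$ for all $n$.
   Context: For $x\in X$ and an integer $j\ge0$ put $S^g_x(j)=\sum_{k=0}^{j-1}g(T^kx)$, and let $F^g_x:[0,\infty)\to\mathbb R$ be the function that agrees with $S^g_x$ at nonnegative integers and is linear on each interval $[j,j+1]$. For a positive integer $l$ put $R^g_{x,l}=\max_{t\in[0,1]}|F^g_x(tl)-tF^g_x(l)|$. A function $g\in L^\infty(X,\mu)$ is cohomologous to a constant in $L^\infty$ if there are $c\in\mathbb R$ and $h\in L^\infty(X,\mu)$ with $g=c+h\circ T-h$ $\mu$-a.e. *)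

From HB Require Import structures.
From mathcomp Require Import all_boot all_order all_algebra.
From mathcomp Require Import all_classical all_reals all_analysis.
Set Implicit Arguments. Unset Strict Implicit. Unset Printing Implicit Defensive.
Import Order.TTheory GRing.Theory Num.Theory.
Local Open Scope classical_set_scope.
Local Open Scope ring_scope.

Section Defs.
Context {R : realType} {d : measure_display} {X : measurableType d}.

(* Standard Borel space: Borel isomorphic to a Borel subset of the real line.
   A probability measure on such a space is (up to completion) a Lebesgue
   probability space. *)
Definition standard_borel : Prop :=
  exists (f : X -> R), measurable_fun setT f /\ set_inj setT f /\
    measurable (f @` setT) /\ (forall A : set X, measurable A -> measurable (f @` A)).

Definition measure_preserving (mu : {measure set X -> \bar R}) (T : X -> X) :=
  measurable_fun setT T /\
  forall A : set X, measurable A -> mu (T @^-1` A) = mu A.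

Definition ergodic (mu : {measure set X -> \bar R}) (T : X -> X) :=
  forall A : set X, measurable A -> T @^-1` A = A ->
    mu A = 0%E \/ mu A = 1%E.

Definition Linfty (mu : {measure set X -> \bar R}) (f : X -> R) :=
  measurable_fun setT f /\ exists M : R, {ae mu, forall x, `|f x| <= M}.

Definition birkhoff_sum (T : X -> X) (g : X -> R) (x : X) (j : nat) : R :=
  \sum_(k < j) g (iter k T x).

Definition interp_sum (T : X -> X) (g : X -> R) (x : X) (s : R) : R :=
  let n := `|Num.floor s|%N in
  birkhoff_sum T g x n + (s - n%:R) * g (iter n T x).

(* R^g_{x,l} = max_{t in [0,1]} |F(t l) - t F(l)|  (max = sup, continuity) *)
Definition Rdev (T : X -> X) (g : X -> R) (x : X) (l : nat) : R :=
  sup [set `|interp_sum T g x (t * l%:R) - t * interp_sum T g x l%:R|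
       | t in `[0, 1]%classic].

Definition cohomologous_to_const (mu : {measure set X -> \bar R}) (T : X -> X)
  (g : X -> R) :=
  exists (c : R) (h : X -> R), Linfty mu h /\
    {ae mu, forall x, g x = c + h (T x) - h x}.

End Defs.

(* (i) => (ii): if g = c + h o T - h with |h| <= K, then F^g_x(s) = s c + O(K) uniformly
   in s >= 0, and the linear term cancels in F(tl) - t F(l), so R^g_{x,l} <= 4K.
   (ii) => (iii) is trivial.
   (iii) => (i): comparing F(j) with (j/l_n) F(l_n) for j <= l_n pins down a slope c(x)
   with |S^g_x(j) - j c(x)| <= C for every j.  The sets {x | S_j - j q bounded above}
   are T-invariant and, off a null set, equal to {c(x) <= q}; ergodicity makes them
   null or conull, so c is a.e. a constant c0.  Then h := sup_j min(S_j - j c0, C)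
   satisfies g - c0 <= h - h o T, and the same construction for -g gives h' with
   c0 - g <= h' - h' o T.  The bounded function h + h' is subinvariant, hence
   invariant a.e. (T preserves its integral), which forces both inequalities to be
   equalities. *)
From HB Require Import structures.
From mathcomp Require Import all_boot all_order all_algebra.
From mathcomp Require Import all_classical all_reals all_analysis.
From mathcomp Require Import lra measurable_realfun.
Import Order.TTheory GRing.Theory Num.Theory.
Local Open Scope classical_set_scope.
Local Open Scope ring_scope.

Lemma exists_nat_ge {R : archiRealDomainType} (r : R) : exists n : nat, r <= n%:R.
Proof.
exists (Num.bound `|r|); apply: le_trans (ler_norm r) _.
exact/ltW/archi_boundP.
Qed.

Lemma exists_invS_lt {R : archiRealFieldType} (e : R) :
  0 < e -> exists n : nat, n.+1%:R^-1 < e.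
Proof.
move=> e0; have [n hn] := exists_nat_ge e^-1; exists n.
rewrite invf_plt ?posrE ?ltr0n //; apply: le_lt_trans hn _; by rewrite ltr_nat.
Qed.

Lemma floor_natr_bounds {R : archiRealDomainType} (s : R) : 0 <= s ->
  (`|Num.floor s|%N)%:R <= s < (`|Num.floor s|%N)%:R + 1.
Proof.
move=> s0; have fz : 0 <= Num.floor s by rewrite floor_ge0.
have -> : (`|Num.floor s|%N%:R : R) = (Num.floor s)%:~R.
  by rewrite -[in RHS](gez0_abs fz) pmulrn.
by rewrite floor_le /=; have := floorD1_gt s; rewrite intrD.
Qed.

Lemma ler_psum_ord {R : numFieldType} (F : nat -> R) {n m : nat} :
  (forall k, 0 <= F k) -> (n <= m)%N -> \sum_(k < n) F k <= \sum_(k < m) F k.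
Proof.
move=> F0 nm; rewrite -!(big_mkord xpredT).
by apply: (nondecreasing_series (P := xpredT)) => // k _ _; exact: F0.
Qed.

Section BirkhoffSum.
Context {R : realType} {d : measure_display} {X : measurableType d}.
Variables (T : X -> X) (g : X -> R).
Local Notation S := (birkhoff_sum T g).

Lemma birkhoff_sum0 x : S x 0 = 0.
Proof. by rewrite /birkhoff_sum big_ord0. Qed.

Lemma birkhoff_sumS x j : S x j.+1 = S x j + g (iter j T x).
Proof. by rewrite /birkhoff_sum big_ord_recr. Qed.

Lemma birkhoff_sumSl x j : S x j.+1 = g x + S (T x) j.
Proof.
rewrite /birkhoff_sum big_ord_recl /=; congr (_ + _).
by apply: eq_bigr => i _; rewrite add0n -iterS iterSr.
Qed.

Lemma birkhoff_sumN x j : birkhoff_sum T (fun y => - g y) x j = - S x j.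
Proof. by rewrite /birkhoff_sum sumrN. Qed.

Lemma interp_sum_nat x (j : nat) : interp_sum T g x j%:R = S x j.
Proof.
rewrite /interp_sum.
have -> : Num.floor (j%:R : R) = j%:Z.
  by rewrite (_ : (j%:R : R) = (j%:Z)%:~R) // intrKfloor.
by rewrite /= subrr mul0r addr0.
Qed.

Lemma norm_interp_sum_le x (l : nat) s : 0 <= s -> s <= l%:R ->
  `|interp_sum T g x s| <= \sum_(k < l.+1) `|g (iter k T x)|.
Proof.
move=> s0 sl; have /andP[h1 h2] := floor_natr_bounds _ s0.
rewrite /interp_sum; set n := `|Num.floor s|%N in h1 h2 *.
have nl : (n <= l)%N by rewrite -(ler_nat R); apply: le_trans h1 sl.
apply: le_trans (ler_normD _ _) _.
apply: le_trans (ler_psum_ord (fun k => `|g (iter k T x)|) (fun k => normr_ge0 _) (nl : n.+1 <= l.+1)%N).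
rewrite big_ord_recr /=; apply: lerD; first exact: ler_norm_sum.
rewrite normrM; apply: ler_piMl => //; rewrite ger0_norm ?subr_ge0 //; lra.
Qed.

Lemma Rdev_term_le x (l : nat) t : 0 <= t <= 1 ->
  `|interp_sum T g x (t * l%:R) - t * interp_sum T g x l%:R|
    <= 2 * \sum_(k < l.+1) `|g (iter k T x)|.
Proof.
move=> /andP[t0 t1]; have l0 : (0 : R) <= l%:R by [].
apply: le_trans (ler_normB _ _) _; rewrite mulr2n mulrDl mul1r; apply: lerD.
  apply: norm_interp_sum_le; first exact: mulr_ge0.
  by rewrite -[leRHS]mul1r ler_wpM2r.
rewrite normrM ger0_norm //; apply: le_trans (ler_piMl (normr_ge0 _) t1) _.
exact: norm_interp_sum_le.
Qed.

Lemma le_Rdev x (l j : nat) : (1 <= l)%N -> (j <= l)%N ->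
  `|S x j - (j%:R / l%:R) * S x l| <= Rdev T g x l.
Proof.
move=> l1 jl; apply: ub_le_sup.
  exists (2 * \sum_(k < l.+1) `|g (iter k T x)|) => _ [t /= t01 <-].
  by apply: Rdev_term_le; rewrite in_itv in t01.
exists (j%:R / l%:R) => /=.
  by rewrite in_itv /= divr_ge0 //= ler_pdivrMr ?ltr0n // mul1r ler_nat.
by rewrite mulfVK ?pnatr_eq0 -?lt0n // !interp_sum_nat.
Qed.

Lemma Rdev_le x l (B : R) :
  (forall t : R, 0 <= t <= 1 ->
    `|interp_sum T g x (t * l%:R) - t * interp_sum T g x l%:R| <= B) ->
  Rdev T g x l <= B.
Proof.
move=> HB; apply: ge_sup.
  by exists `|interp_sum T g x (0 * l%:R) - 0 * interp_sum T g x l%:R|, 0 => //=;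
    rewrite in_itv /= lexx ler01.
by move=> _ [t /= t01 <-]; apply: HB; move: t01; rewrite in_itv.
Qed.

Lemma Rdev_coboundary_le x (c : R) (h : X -> R) (K : R) :
  (forall k, g (iter k T x) = c + h (iter k.+1 T x) - h (iter k T x)) ->
  (forall k, `|h (iter k T x)| <= K) -> forall l, Rdev T g x l <= 4 * K.
Proof.
move=> hg hK l.
have Sn n : S x n = n%:R * c + h (iter n T x) - h x.
  elim: n => [|n IH]; first by rewrite birkhoff_sum0 mul0r add0r subrr.
  by rewrite birkhoff_sumS IH hg -addn1 natrD; lra.
have interp_linear (s : R) : 0 <= s -> `|interp_sum T g x s - s * c| <= 2 * K.
  move=> s0; have /andP[h1 h2] := floor_natr_bounds _ s0.
  rewrite /interp_sum; set n := `|Num.floor s|%N in h1 h2 *.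
  rewrite Sn hg.
  have := hK n; have := hK n.+1; have := hK 0%N.
  move=> /ler_normlP[a1 a2] /ler_normlP[b1 b2] /ler_normlP[c1 c2].
  rewrite ler_norml; apply/andP; split; nra.
apply: Rdev_le => t /andP[t0 t1].
have l0 : (0 : R) <= l%:R by [].
have := interp_linear (t * l%:R) (mulr_ge0 t0 l0); have := interp_linear l%:R l0.
move=> /ler_normlP[a1 a2] /ler_normlP[b1 b2].
rewrite ler_norml; apply/andP; split; nra.
Qed.

(* The slopes a n = S(l_n)/l_n are squeezed between lo j and hi k for all j, k, so any
   value between sup lo and inf hi works as c. *)
Lemma birkhoff_sum_linear_of_Rdev x (C : R) (ln : nat -> nat) :
  (forall M : nat, exists n, (M <= ln n)%N) ->
  (forall n, Rdev T g x (ln n) <= C) ->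
  exists c : R, forall j, `|S x j - j%:R * c| <= C.
Proof.
move=> lbig lC.
pose a n := S x (ln n) / (ln n)%:R.
have near_slope j n : (j.+1 <= ln n)%N -> `|S x j.+1 - j.+1%:R * a n| <= C.
  move=> jl; apply: le_trans (lC n).
  rewrite /a mulrA (mulrC j.+1%:R) -mulrA mulrC.
  exact: le_Rdev (leq_trans _ jl) jl.
pose lo j := (S x j.+1 - C) / j.+1%:R.
pose hi j := (S x j.+1 + C) / j.+1%:R.
have lo_hi j k : lo j <= hi k.
  have [n /[!geq_max] /andP[jn kn]] := lbig (maxn j.+1 k.+1).
  have /ler_normlP[j1 j2] := near_slope _ _ jn.
  have /ler_normlP[k1 k2] := near_slope _ _ kn.
  apply: (@le_trans _ _ (a n)).
    by rewrite /lo ler_pdivrMr ?ltr0n //; lra.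
  by rewrite /hi ler_pdivlMr ?ltr0n //; lra.
pose E := [set lo j | j in setT].
have Eub : has_ubound E by exists (hi 0%N) => _ [j _ <-].
exists (sup E).
have bnd j : `|S x j.+1 - j.+1%:R * sup E| <= C.
  have h1 : lo j <= sup E by apply: (ub_le_sup Eub); exists j.
  have h2 : sup E <= hi j by apply: ge_sup => [|_ [k _ <-]//]; exists (lo 0%N), 0%N.
  move: h1 h2; rewrite /lo /hi ler_pdivrMr ?ltr0n // ler_pdivlMr ?ltr0n // => h1 h2.
  by rewrite ler_norml; apply/andP; split; lra.
case=> [|j]; last exact: bnd.
by rewrite birkhoff_sum0 mul0r subrr normr0; apply: le_trans (bnd 0%N).
Qed.

Definition slope_set (q : R) :=
  [set x | exists B : nat, forall j, S x j - j%:R * q <= B%:R].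

Lemma preimage_slope_set q : T @^-1` slope_set q = slope_set q.
Proof.
apply/seteqP; split => x /=.
  move=> [B HB]; have [n hn] := exists_nat_ge (`|g x - q| + B%:R); exists n => -[|j].
    by rewrite birkhoff_sum0 mul0r subrr.
  have := HB j; have := ler_norm (g x - q).
  rewrite birkhoff_sumSl -addn1 natrD; lra.
move=> [B HB]; have [n hn] := exists_nat_ge (`|g x - q| + B%:R); exists n => j.
have := HB j.+1; have := ler_norm (- (g x - q)); rewrite normrN.
rewrite birkhoff_sumSl -addn1 natrD; lra.
Qed.

Lemma slope_set_le q q' : q <= q' -> slope_set q `<=` slope_set q'.
Proof.
move=> qq x [B HB]; exists B => j; apply: le_trans (HB j).
by rewrite lerD2l lerN2 ler_wpM2l.
Qed.

Lemma in_slope_set x (C c q : R) : (forall j, `|S x j - j%:R * c| <= C) ->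
  slope_set q x <-> c <= q.
Proof.
move=> hc; split.
  move=> [B HB]; rewrite leNgt; apply/negP => qc.
  have [n] := exists_nat_ge ((B%:R + C) / (c - q)).
  rewrite ler_pdivrMr ?subr_gt0 // => hn.
  have := HB n.+1; have /ler_normlP[h1 h2] := hc n.+1.
  rewrite -addn1 natrD in h1 h2 *; nra.
move=> cq; have [n hn] := exists_nat_ge C; exists n => j.
have /ler_normlP[h1 h2] := hc j.
have : 0 <= (j%:R : R) by [].
nra.
Qed.

End BirkhoffSum.

Section Orbits.
Context {R : realType} {d : measure_display} {X : measurableType d}.
Context {mu : {measure set X -> \bar R}} {T : X -> X}.

Lemma measurable_preimageT (d' : measure_display) (Y : measurableType d')
    (f : X -> Y) (A : set Y) :
  measurable_fun setT f -> measurable A -> measurable (f @^-1` A).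
Proof. by move=> mf mA; rewrite -[_ @^-1` _]setTI; exact: mf. Qed.

Lemma measurable_iter k : measurable_fun setT T -> measurable_fun setT (iter k T).
Proof.
move=> mT; elim: k => [|k IH] /=; first exact: measurable_id.
exact: measurableT_comp mT IH.
Qed.

Lemma measure_preimage_iter k A : measure_preserving mu T -> measurable A ->
  mu (iter k T @^-1` A) = mu A.
Proof.
move=> [mT hT]; elim: k A => [|k IH] A mA //.
have -> : iter k.+1 T @^-1` A = iter k T @^-1` (T @^-1` A) by [].
by rewrite IH ?hT //; exact: measurable_preimageT.
Qed.

Lemma ae_forall_iter {P : X -> Prop} : measure_preserving mu T ->
  {ae mu, forall x, P x} -> {ae mu, forall x, forall k, P (iter k T x)}.
Proof.
move=> mp [N [mN N0 PN]]; apply: ae_foralln => k.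
exists (iter k T @^-1` N); split.
- exact: measurable_preimageT (measurable_iter k mp.1) mN.
- by rewrite measure_preimage_iter.
- by move=> x /= nP; apply: PN.
Qed.

Lemma measurable_birkhoff_sum {g : X -> R} j :
  measurable_fun setT T -> measurable_fun setT g ->
  measurable_fun setT (fun x => birkhoff_sum T g x j).
Proof.
move=> mT mg; elim: j => [|j IH].
  by under eq_fun do rewrite birkhoff_sum0; exact: measurable_cst.
under eq_fun do rewrite birkhoff_sumS.
by apply: measurable_funD => //; exact: measurableT_comp mg (measurable_iter j mT).
Qed.

Lemma measurable_slope_set {g : X -> R} q :
  measurable_fun setT T -> measurable_fun setT g -> measurable (slope_set T g q).
Proof.
move=> mT mg.
have -> : slope_set T g q = \bigcup_(B : nat) \bigcap_(j : nat)
    ((fun x => birkhoff_sum T g x j - j%:R * q) @^-1` `]-oo, B%:R]).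
  apply/seteqP; split => x /=.
    by move=> [B HB]; exists B => // j _ /=; rewrite in_itv /= HB.
  by move=> [B _ HB]; exists B => j; have := HB j I; rewrite /= in_itv.
apply: bigcupT_measurable => B; apply: bigcapT_measurable => j.
apply: measurable_preimageT; last exact: measurable_itv.
exact: measurable_funB (measurable_birkhoff_sum j mT mg) (measurable_cst _).
Qed.

End Orbits.

Section ZeroOneSublevels.
Context {R : realType} {d : measure_display} {X : measurableType d}.
Variables (mu : probability X R) (A : R -> set X) (P : X -> R -> Prop).
Hypotheses (mA : forall q, measurable (A q))
  (A01 : forall q, mu (A q) = 0%E \/ mu (A q) = 1%E)
  (A_le : forall q q', q <= q' -> A q `<=` A q')
  (A_sublevel : forall x c, P x c -> forall q, A q x <-> c <= q)
  (aeP : {ae mu, forall x, exists c, P x c}).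

Lemma probability_not_negligibleT : ~ mu.-negligible setT.
Proof.
move=> /(measure_negligible measurableT) mu0.
by have := @probability_setT _ _ _ mu; rewrite mu0 => /eqP; rewrite eqe eq_sym oner_eq0.
Qed.

Let negligible_null {q} : mu (A q) = 0%E -> mu.-negligible (A q).
Proof. by move=> h; apply/negligibleP. Qed.

Let negligibleC_full {q} : mu (A q) = 1%E -> mu.-negligible (~` A q).
Proof.
move=> h; apply/negligibleP; first exact: measurableC.
apply: eq_trans (@probability_setC _ _ _ mu _ (mA q)) _.
by rewrite h -EFinB subrr.
Qed.

Let negligible_notP : mu.-negligible (~` [set x | exists c, P x c]).
Proof. exact: aeP. Qed.

Lemma exists_sublevel_full : exists q, mu (A q) = 1%E.
Proof.
apply: contrapT => nofull.
have null n : mu (A n%:R) = 0%E.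
  by case: (A01 n%:R) => // h; exfalso; apply: nofull; exists n%:R.
apply: probability_not_negligibleT.
apply: (negligibleS _ (negligibleU
  (negligible_bigcup (fun n => negligible_null (null n))) negligible_notP)) => x _.
have [[c hc]|] := pselect (exists c, P x c); last by right.
left; have [n hn] := exists_nat_ge c; exists n => //; exact/(A_sublevel _ _ hc _).
Qed.

Lemma exists_sublevel_null : exists q, mu (A q) = 0%E.
Proof.
apply: contrapT => nonull.
have full n : mu (A (- n%:R)) = 1%E.
  by case: (A01 (- n%:R)) => // h; exfalso; apply: nonull; exists (- n%:R).
apply: probability_not_negligibleT.
apply: (negligibleS _ (negligibleU
  (negligible_bigcup (fun n => negligibleC_full (full n))) negligible_notP)) => x _.
have [[c hc]|] := pselect (exists c, P x c); last by right.
left; have [n hn] := exists_nat_ge (1 - c); exists n => //=.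
move/(A_sublevel _ _ hc _); lra.
Qed.

(* The threshold c0 is the supremum of the levels q whose sublevel set is null. *)
Lemma ae_sublevel_const : exists c0, {ae mu, forall x, P x c0}.
Proof.
pose Q0 := [set q | mu (A q) = 0%E].
have Q0_sup : has_sup Q0.
  split; first by have [q0 hq0] := exists_sublevel_null; exists q0.
  have [q1 hq1] := exists_sublevel_full.
  exists q1 => q /= hq; rewrite leNgt; apply/negP => lt.
  have : (mu (A q1) <= mu (A q))%E.
    exact: le_measure (mem_set (mA q1)) (mem_set (mA q)) (A_le _ _ (ltW lt)).
  by rewrite hq hq1 lee_fin ler10.
pose c0 := sup Q0; exists c0.
have below n : mu.-negligible (A (c0 - n.+1%:R^-1)).
  have [|e He lt] := @sup_adherent _ _ n.+1%:R^-1 _ Q0_sup; first by rewrite invr_gt0.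
  exact: negligibleS (A_le _ _ (ltW lt)) (negligible_null He).
have above n : mu.-negligible (~` A (c0 + n.+1%:R^-1)).
  apply: negligibleC_full; case: (A01 (c0 + n.+1%:R^-1)) => // h.
  have := ub_le_sup Q0_sup.2 h; rewrite -/c0 gerDl leNgt invr_gt0 ltr0n //.
apply: (negligibleS _ (negligibleU (negligibleU negligible_notP
  (negligible_bigcup below)) (negligible_bigcup above))) => x /= nPx.
have [[c hc]|] := pselect (exists c, P x c); last by left; left.
have [lt|gt|eq] := ltgtP c c0; last by rewrite eq in hc.
- have [|n hn] := exists_invS_lt (c0 - c); first by rewrite subr_gt0.
  left; right; exists n => //; apply/(A_sublevel _ _ hc _).
  by move: hn; set e := n.+1%:R^-1; lra.
- have [|n hn] := exists_invS_lt (c - c0); first by rewrite subr_gt0.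
  right; exists n => //= /(A_sublevel _ _ hc _).
  by move: hn; set e := n.+1%:R^-1; lra.
Qed.

End ZeroOneSublevels.

Lemma ergodic_birkhoff_slope_const {R : realType} {d : measure_display}
    {X : measurableType d} (mu : probability X R) (T : X -> X) (g : X -> R) (C : R) :
  measurable_fun setT T -> measurable_fun setT g -> ergodic mu T ->
  {ae mu, forall x, exists c, forall j, `|birkhoff_sum T g x j - j%:R * c| <= C} ->
  exists c0, {ae mu, forall x, forall j, `|birkhoff_sum T g x j - j%:R * c0| <= C}.
Proof.
move=> mT mg erg.
apply: (ae_sublevel_const mu (slope_set T g)).
- by move=> q; exact: measurable_slope_set.
- by move=> q; apply: erg; [exact: measurable_slope_set|exact: preimage_slope_set].
- exact: slope_set_le.
- by move=> x c hc q; exact: in_slope_set hc.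
Qed.

Lemma bounded_birkhoff_subcoboundary {R : realType} {d : measure_display}
    {X : measurableType d} {mu : {measure set X -> \bar R}} {T : X -> X} {g : X -> R}
    {c0 C : R} :
  measurable_fun setT T -> measurable_fun setT g -> 0 <= C ->
  {ae mu, forall x, forall j, birkhoff_sum T g x j - j%:R * c0 <= C} ->
  exists h : X -> R, [/\ measurable_fun setT h, (forall x, 0 <= h x <= C) &
    {ae mu, forall x, g x - c0 <= h x - h (T x)}].
Proof.
move=> mT mg C0 hae.
pose u (j : nat) x := Num.min (birkhoff_sum T g x j - j%:R * c0) C.
have u0 x : u 0%N x = 0 by rewrite /u birkhoff_sum0 mul0r subrr; apply/min_idPl.
have ub x : has_ubound (sdrop (fun j => u j x) 0).
  by exists C => _ [j _ <-]; rewrite /u ge_min lexx orbT.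
pose h x := sups (fun j => u j x) 0%N.
have hge x j : u j x <= h x by apply: (ub_le_sup (ub x)); exists j.
have hle x (B : R) : (forall j, u j x <= B) -> h x <= B.
  by move=> hB; apply: ge_sup => [|_ [j _ <-]//]; exists (u 0%N x), 0%N.
exists h; split.
- apply: (measurable_fun_sups (h := fun j x => u j x)).
    by move=> t _; exists C => _ [j _ <-]; rewrite /u ge_min lexx orbT.
  move=> j; apply: measurable_minr (measurable_cst C).
  exact: measurable_funB (measurable_birkhoff_sum j mT mg) (measurable_cst _).
- move=> x; rewrite -(u0 x) hge /=; apply: hle => j.
  by rewrite /u ge_min lexx orbT.
apply: filterS hae => x hx.
suff : h (T x) <= h x - (g x - c0) by lra.
apply: hle => j.
have e : u j.+1 x = birkhoff_sum T g x j.+1 - j.+1%:R * c0 by apply/min_idPl.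
apply: le_trans (_ : u j.+1 x - (g x - c0) <= _); last by rewrite lerD2r hge.
rewrite e birkhoff_sumSl -addn1 natrD /u ge_min; apply/orP; left; lra.
Qed.

Section Integrals.
Context {R : realType} {d : measure_display} {X : measurableType d}.

Lemma integral_comp_preserving (mu : {measure set X -> \bar R}) (T : X -> X) (f : X -> R) :
  measure_preserving mu T -> measurable_fun setT f -> (forall x, 0 <= f x) ->
  (\int[mu]_x (f (T x))%:E = \int[mu]_x (f x)%:E)%E.
Proof.
move=> [mT hT] mf f0.
have := ge0_integral_pushforward mT mu (D := setT) (f := EFin \o f) measurableT
  ((measurable_EFinP _ _).2 mf) (fun y _ => ltac:(rewrite /= lee_fin; exact: f0)).
rewrite preimage_setT => <-.
apply: eq_measure_integral => A mA _.
exact: hT.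
Qed.

(* Integrate f = h + max(f - h, 0): equal finite integrals force max(f - h, 0) = 0 a.e. *)
Lemma ae_eq_of_ae_le_integral (mu : {measure set X -> \bar R}) (f h : X -> R) :
  measurable_fun setT f -> measurable_fun setT h ->
  (forall x, 0 <= f x) -> (forall x, 0 <= h x) ->
  {ae mu, forall x, h x <= f x} ->
  (\int[mu]_x (h x)%:E)%E \is a fin_num ->
  (\int[mu]_x (f x)%:E = \int[mu]_x (h x)%:E)%E ->
  {ae mu, forall x, f x = h x}.
Proof.
move=> mf mh f0 h0 hf hfin If.
pose p x : R := Num.max (f x - h x) 0.
have mp : measurable_fun setT p :=
  measurable_maxr (measurable_funB mf mh) (measurable_cst (0 : R)).
have p0 x : 0 <= p x by rewrite /p le_max lexx orbT.
have split_f : (\int[mu]_x (f x)%:E = \int[mu]_x (h x)%:E + \int[mu]_x (p x)%:E)%E.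
  rewrite -ge0_integralD //; last 4 first.
  - by move=> x _; rewrite lee_fin.
  - exact/measurable_EFinP.
  - by move=> x _; rewrite lee_fin.
  - exact/measurable_EFinP.
  apply: ge0_ae_eq_integral => //.
  - exact/measurable_EFinP.
  - exact/measurable_EFinP/measurable_funD.
  - by move=> x _; rewrite lee_fin.
  - by move=> x _; rewrite lee_fin addr_ge0.
  apply: filterS hf => x hx _; congr EFin; rewrite /p max_l ?subr_ge0 //; lra.
have Ip : (\int[mu]_x (p x)%:E = 0)%E.
  move: split_f; rewrite If => /(congr1 (fun y => y - \int[mu]_x (h x)%:E)%E).
  by rewrite subee // addeAC subee // add0e.
have : ae_eq mu setT (EFin \o p) (cst 0%E).
  apply/ae_eq_integral_abs => //; first exact/measurable_EFinP.
  by rewrite -Ip; apply: eq_integral => x _ /=; rewrite ger0_norm.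
move=> p_ae; apply: filterS2 hf p_ae => x hx /(_ I) /= /eqP; rewrite eqe => /eqP px.
apply/eqP; rewrite eq_le hx andbT -subr_le0.
by rewrite -px /p le_max lexx.
Qed.

Lemma ae_invariant_of_subinvariant {mu : probability X R} {T : X -> X} {k : X -> R}
    {K : R} :
  measure_preserving mu T -> measurable_fun setT k -> (forall x, 0 <= k x <= K) ->
  {ae mu, forall x, k (T x) <= k x} -> {ae mu, forall x, k x = k (T x)}.
Proof.
move=> mp mk kb hle.
have k0 x : 0 <= k x by have /andP[] := kb x.
have mkT : measurable_fun setT (k \o T) := measurableT_comp mk mp.1.
have Ik_le : (\int[mu]_x (k x)%:E <= K%:E)%E.
  apply: le_trans (_ : (\int[mu]_x (cst K%:E) x <= _)%E).
    apply: ge0_le_integral => //.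
    - by move=> x _; rewrite lee_fin.
    - exact/measurable_EFinP.
    - by move=> x _; rewrite lee_fin; have /andP[] := kb x.
  have muT : (K%:E * mu setT = K%:E * 1)%E.
    by congr (mule _ _); exact: probability_setT.
  by rewrite integral_cst // muT mule1.
apply: ae_eq_of_ae_le_integral hle _ _ => //.
- rewrite integral_comp_preserving // ge0_fin_numE ?(le_lt_trans Ik_le) ?ltry //.
  by apply: integral_ge0 => x _; rewrite lee_fin.
- by rewrite integral_comp_preserving.
Qed.

End Integrals.

Section Equivalences.
Context {R : realType} {d : measure_display} {X : measurableType d}.
Context {mu : probability X R} {T : X -> X} {g : X -> R}.

Lemma Rdev_bounded_of_cohomologous : measure_preserving mu T ->
  cohomologous_to_const mu T g ->
  exists C : R, {ae mu, forall x, forall l : nat, (1 <= l)%N -> Rdev T g x l <= C}.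
Proof.
move=> mp [c [h [[mh [M hM]] hg]]]; exists (4 * M).
have := ae_forall_iter mp hg; have := ae_forall_iter mp hM.
apply: filterS2 => x hK hcob l _.
exact: Rdev_coboundary_le hcob hK l.
Qed.

(* Gottschalk-Hedlund: Birkhoff sums within bounded distance of j c0 give a coboundary,
   built from the two subcoboundaries of g - c0 and c0 - g. *)
Lemma cohomologous_of_bounded_birkhoff (c0 C : R) :
  measure_preserving mu T -> measurable_fun setT g ->
  {ae mu, forall x, forall j, `|birkhoff_sum T g x j - j%:R * c0| <= C} ->
  cohomologous_to_const mu T g.
Proof.
move=> mp mg hc0; have mT := mp.1.
have hup : {ae mu, forall x, forall j, birkhoff_sum T g x j - j%:R * c0 <= `|C|}.
  apply: filterS hc0 => x hx j; have /ler_normlP[_ h] := hx j.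
  exact: le_trans h (ler_norm C).
have hlow : {ae mu, forall x, forall j,
    birkhoff_sum T (fun y => - g y) x j - j%:R * (- c0) <= `|C|}.
  apply: filterS hc0 => x hx j; have /ler_normlP[h _] := hx j.
  rewrite birkhoff_sumN; have := ler_norm C; lra.
have [h1 [mh1 b1 ae1]] := bounded_birkhoff_subcoboundary mT mg (normr_ge0 C) hup.
have [h2 [mh2 b2 ae2]] :=
  bounded_birkhoff_subcoboundary mT (measurable_funN mg) (normr_ge0 C) hlow.
have kb x : 0 <= h1 x + h2 x <= `|C| + `|C|.
  by have /andP[? ?] := b1 x; have /andP[? ?] := b2 x; apply/andP; split; lra.
have hle : {ae mu, forall x, h1 (T x) + h2 (T x) <= h1 x + h2 x}.
  by apply: filterS2 ae1 ae2 => x e1 /= e2; lra.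
have heq := ae_invariant_of_subinvariant (k := h1 \+ h2) mp (measurable_funD mh1 mh2) kb hle.
exists c0, (fun x => - h1 x); split.
  split; first exact: measurable_funN.
  exists `|C|; apply: aeW => x; have /andP[a1 a2] := b1 x.
  by rewrite normrN ger0_norm.
have ae12 : {ae mu, forall x,
    g x - c0 <= h1 x - h1 (T x) /\ c0 - g x <= h2 x - h2 (T x)}.
  by apply: filterS2 ae1 ae2 => x e1 /= e2; split; lra.
by apply: filterS2 heq ae12 => x /= e [e1 e2]; lra.
Qed.

Lemma cohomologous_of_Rdev_subseq_bounded :
  measure_preserving mu T -> ergodic mu T -> Linfty mu g ->
  (exists C : R, {ae mu, forall x, exists ln : nat -> nat,
        (forall n, (0 < ln n)%N) /\
        (forall M : nat, exists N : nat, forall n, (N <= n)%N -> (M <= ln n)%N) /\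
        (forall n, Rdev T g x (ln n) <= C)}) ->
  cohomologous_to_const mu T g.
Proof.
move=> mp erg [mg _] [C hC].
have [c0 hc0] : exists c0,
    {ae mu, forall x, forall j, `|birkhoff_sum T g x j - j%:R * c0| <= C}.
  apply: ergodic_birkhoff_slope_const mp.1 mg erg _.
  apply: filterS hC => x [ln [_ [lbig lC]]].
  apply: birkhoff_sum_linear_of_Rdev lC => M.
  by have [N HN] := lbig M; exists N; exact: HN.
exact: cohomologous_of_bounded_birkhoff mp mg hc0.
Qed.

Lemma Rdev_subseq_bounded_of_bounded :
  (exists C : R, {ae mu, forall x, forall l : nat, (1 <= l)%N -> Rdev T g x l <= C}) ->
  (exists C : R, {ae mu, forall x, exists ln : nat -> nat,
        (forall n, (0 < ln n)%N) /\
        (forall M : nat, exists N : nat, forall n, (N <= n)%N -> (M <= ln n)%N) /\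
        (forall n, Rdev T g x (ln n) <= C)}).
Proof.
move=> [C hC]; exists C; apply: filterS hC => x hx.
exists S; split=> //; split=> [M|n]; last exact: hx.
by exists M => n /leqW.
Qed.

End Equivalences.

Theorem mainTheorem2 (R : realType) (d : measure_display) (X : measurableType d)
  (mu : probability X R) (T : X -> X) (g : X -> R) :
  @standard_borel R d X ->
  measure_preserving mu T -> ergodic mu T -> Linfty mu g ->
  (cohomologous_to_const mu T g <->
     exists C : R, {ae mu, forall x, forall l : nat, (1 <= l)%N -> Rdev T g x l <= C})
  /\
  ((exists C : R, {ae mu, forall x, forall l : nat, (1 <= l)%N -> Rdev T g x l <= C}) <->
   (exists C : R, {ae mu, forall x, exists ln : nat -> nat,
        (forall n, (0 < ln n)%N) /\
        (forall M : nat, exists N : nat, forall n, (N <= n)%N -> (M <= ln n)%N) /\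
        (forall n, Rdev T g x (ln n) <= C)})).
Proof.
move=> _ mp erg lg.
have i_ii := Rdev_bounded_of_cohomologous mp.
have ii_iii := Rdev_subseq_bounded_of_bounded (mu := mu) (T := T) (g := g).
have iii_i := cohomologous_of_Rdev_subseq_bounded mp erg lg.
split; split.
- exact: i_ii.
- by move=> /ii_iii/iii_i.
- exact: ii_iii.
- by move=> /iii_i/i_ii.
Qed.
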